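(* Let $N\ge 0$ and let $\mathcal P\subseteq \Pi=\mathbb C[x_1,\dots,x_s]$ be a degree reducing universal interpolation space of order $N+1$ which is non-redundant, i.e. no proper subspace $\mathcal Q\subsetneq\mathcal P$ is also a degree reducing universal interpolation space of order $N+1$. Then $\mathcal P\subseteq \Pi_N$.
   Context: $\Pi=\mathbb C[x_1,\dots,x_s]$; $\deg p$ denotes total degree, with the convention $\deg 0<0$; $\Pi_N$ is the space of polynomials of total degree at most $N$. A linear subspace $\mathcal P\subseteq\Pi$ is a degree reducing universal interpolation space of order $M$ if for every finite set $X\subset\mathbb C^s$ with $\#X\le M$ and every $q\in\Pi$ there exists $p\in\mathcal P$ with $p(x)=q(x)$ for all $x\in X$ and $\deg p\le\deg q$. *)

From HB Require Import structures.
From mathcomp Require Import all_boot all_order all_algebra.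
From mathcomp Require Import reals complex mpoly.
Set Implicit Arguments. Unset Strict Implicit. Unset Printing Implicit Defensive.
Import Order.TTheory GRing.Theory Num.Theory.
Local Open Scope ring_scope.

Section Defs.
Variables (R : realType) (s : nat).
Local Notation C := (R[i]).
Local Notation Pi := {mpoly C[s]}.

(* Total degree comparison: msize p = deg p + 1 for p <> 0, msize 0 = 0
   (consistent with the convention deg 0 < 0).
   deg p <= deg q  <->  msize p <= msize q. *)

Definition lin_subspace (P : Pi -> Prop) : Prop :=
  P 0 /\ forall (a : C) (p q : Pi), P p -> P q -> P (a *: p + q).

Definition evalpt (p : Pi) (x : 'rV[C]_s) : C := p.@[fun i => x 0 i].

(* Degree reducing universal interpolation space of order M:
   for every finite set X of at most M points (given as a list; repetitions
   do not matter) and every q, some p in P interpolates q on X with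
   deg p <= deg q. *)
Definition dr_univ_interp (M : nat) (P : Pi -> Prop) : Prop :=
  lin_subspace P /\
  forall (X : seq 'rV[C]_s) (q : Pi), (size X <= M)%N ->
    exists p : Pi, [/\ P p, (forall x, x \in X -> evalpt p x = evalpt q x)
                      & (msize p <= msize q)%N].

Definition nonredundant_druis (M : nat) (P : Pi -> Prop) : Prop :=
  dr_univ_interp M P /\
  ~ exists Q : Pi -> Prop,
      [/\ lin_subspace Q, (forall p, Q p -> P p), (exists p, P p /\ ~ Q p)
        & dr_univ_interp M Q].
End Defs.

(* Given a degree reducing universal interpolation space P of order N+1,
   its elements of degree at most N already form such a space.  Indeed, any
   q agrees on a set X of at most N+1 points with some r of degree at most
   min(deg q, N) (a Lagrange-type interpolant built from products of affine
   factors), and the element of P interpolating r on X with deg <= deg r then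
   serves for q as well.  Non-redundancy forbids this subspace from being
   proper, so P is contained in Pi_N. *)

From HB Require Import structures.
From mathcomp Require Import all_boot all_order all_algebra.
From mathcomp Require Import reals complex mpoly.
Set Implicit Arguments. Unset Strict Implicit. Unset Printing Implicit Defensive.
Import Order.TTheory GRing.Theory Num.Theory.
Local Open Scope ring_scope.

Lemma row_neqP (T : eqType) (n : nat) (x y : 'rV[T]_n) :
  x != y -> exists k, x 0 k != y 0 k.
Proof.
move=> neq_xy; apply/existsP; apply: contraNT neq_xy.
rewrite negb_exists => /forallP eq_xy; apply/eqP/matrixP => i j.
by rewrite (ord1 i); apply/eqP/negPn/eq_xy.
Qed.

Section Interpolation.
Variables (F : fieldType) (n : nat).
Implicit Types (p q : {mpoly F[n]}) (x y : 'rV[F]_n) (X : seq 'rV[F]_n).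

Definition meval_row p x : F := p.@[fun i => x 0 i].

Lemma meval_rowD p q x : meval_row (p + q) x = meval_row p x + meval_row q x.
Proof. exact: mevalD. Qed.

Lemma meval_rowM p q x : meval_row (p * q) x = meval_row p x * meval_row q x.
Proof. exact: mevalM. Qed.

Lemma meval_rowZ c p x : meval_row (c *: p) x = c * meval_row p x.
Proof. exact: mevalZ. Qed.

Lemma meval_row_XsubC k c x : meval_row ('X_k - c%:MP) x = x 0 k - c.
Proof. by rewrite /meval_row mevalB mevalXU mevalC. Qed.

Lemma msize_XsubC_le k c : (msize ('X_k - c%:MP : {mpoly F[n]}) <= 2)%N.
Proof.
apply: leq_trans (msizeD_le _ _) _.
by rewrite msizeN msizeX mdeg1 msizeC geq_max /=; case: (c != 0).
Qed.

Lemma exists_separating_mpoly x X : exists w : {mpoly F[n]},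
  [/\ (msize w <= (size X).+1)%N, meval_row w x != 0 &
      forall y, y \in X -> y != x -> meval_row w y = 0].
Proof.
elim: X => [|y Y [w [w_size wx_neq0 w_vanish]]].
  by exists 1; split; rewrite ?msize1 // /meval_row meval1 oner_neq0.
have [->|y_neq_x] := eqVneq y x.
  exists w; split=> [||z]; [exact: leqW | exact: wx_neq0 |].
  by rewrite inE => /predU1P[-> /eqP//|]; apply: w_vanish.
have [k yk_neq_xk] := row_neqP y_neq_x.
pose l : {mpoly F[n]} := 'X_k - (y 0 k)%:MP.
have lx_neq0 : meval_row l x != 0 by rewrite meval_row_XsubC subr_eq0 eq_sym.
exists (l * w); split.
- have l_neq0 : l != 0 by apply: contraNneq lx_neq0 => ->; rewrite /meval_row meval0.
  have w_neq0 : w != 0 by apply: contraNneq wx_neq0 => ->; rewrite /meval_row meval0.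
  have l_size : (msize l <= 2)%N by exact: msize_XsubC_le.
  rewrite msizeM //= -subn1 leq_subLR.
  exact: leq_trans (leq_add l_size w_size) _.
- by rewrite meval_rowM mulf_neq0.
- move=> z; rewrite inE meval_rowM => /predU1P[-> _|zY z_neq_x].
    by rewrite meval_row_XsubC subrr mul0r.
  by rewrite w_vanish // mulr0.
Qed.

Lemma exists_interpolating_mpoly X q : exists r : {mpoly F[n]},
  (msize r <= size X)%N /\ forall x, x \in X -> meval_row r x = meval_row q x.
Proof.
elim: X => [|x Y [r [r_size r_interp]]]; first by exists 0; rewrite msize0.
have [w [w_size wx_neq0 w_vanish]] := exists_separating_mpoly x Y.
pose c := (meval_row q x - meval_row r x) / meval_row w x.
exists (r + c *: w); split.
  apply: leq_trans (msizeD_le _ _) _; rewrite geq_max (leqW r_size) /=.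
  exact: leq_trans (msizeZ_le _ _) w_size.
move=> z; rewrite meval_rowD meval_rowZ inE.
have [-> _|z_neq_x /= zY] := eqVneq z x.
  by rewrite /c divfK // addrC subrK.
by rewrite w_vanish // mulr0 addr0 r_interp.
Qed.

Lemma exists_interpolating_mpoly_msize_le X q : exists r : {mpoly F[n]},
  [/\ (msize r <= size X)%N, (msize r <= msize q)%N &
      forall x, x \in X -> meval_row r x = meval_row q x].
Proof.
have [q_small|q_large] := leqP (msize q) (size X); first by exists q.
have [r [r_size r_interp]] := exists_interpolating_mpoly X q.
by exists r; split; rewrite // (leq_trans r_size (ltnW q_large)).
Qed.

End Interpolation.

Section Truncation.
Variables (R : realType) (s : nat).
Local Notation Pi := {mpoly R[i][s]}.

Definition msize_le_subspace (M : nat) (P : Pi -> Prop) (p : Pi) : Prop :=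
  P p /\ (msize p <= M)%N.

Lemma lin_subspace_msize_le M P :
  lin_subspace P -> lin_subspace (msize_le_subspace M P).
Proof.
move=> [P0 P_lin]; split; first by split; rewrite ?msize0.
move=> a p q [Pp p_size] [Pq q_size]; split; first exact: P_lin.
apply: leq_trans (msizeD_le _ _) _; rewrite geq_max q_size andbT.
exact: leq_trans (msizeZ_le _ _) p_size.
Qed.

Lemma dr_univ_interp_msize_le M P :
  dr_univ_interp M P -> dr_univ_interp M (msize_le_subspace M P).
Proof.
move=> [P_lin P_interp]; split; first exact: lin_subspace_msize_le.
move=> X q X_size.
have [r [r_size r_le_q r_interp]] := exists_interpolating_mpoly_msize_le X q.
have [p [Pp p_interp p_le_r]] := P_interp X r X_size.
exists p; split.
- by split; rewrite // (leq_trans p_le_r) // (leq_trans r_size).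
- by move=> x xX; rewrite p_interp //; apply: r_interp.
- exact: leq_trans p_le_r r_le_q.
Qed.

End Truncation.

Theorem lemma14 (R : realType) (s N : nat) (P : {mpoly R[i][s]} -> Prop) :
  nonredundant_druis N.+1 P ->
  forall p : {mpoly R[i][s]}, P p -> (msize p <= N.+1)%N.
Proof.
move=> [P_druis P_nonredundant] p Pp; apply/negPn/negP => p_large.
apply: P_nonredundant; exists (msize_le_subspace N.+1 P); split.
- by apply: lin_subspace_msize_le; case: P_druis.
- by move=> q [].
- by exists p; split=> // -[_ p_small]; rewrite p_small in p_large.
- exact: dr_univ_interp_msize_le.
Qed.
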